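(* Let $\mathbb{T}$ be a time scale, let $a<b$ be points of $\mathbb{T}$, and let $\alpha,\beta$ be real constants. Suppose the characteristic equation $\lambda^2+\alpha\lambda+\beta=0$ has two distinct positive roots. Then the equation $$x^{\Delta\Delta}(t)+\alpha x^{\Delta}(t)+\beta x(t)=0,\quad t\in[a,b]_{\mathbb{T}},$$ has Hyers–Ulam stability on $[a,b]_{\mathbb{T}}$; that is, for every $\varepsilon>0$, whenever $y\in C^2_{rd}([a,b]_{\mathbb{T}})$ satisfies $|y^{\Delta\Delta}(t)+\alpha y^{\Delta}(t)+\beta y(t)|\le\varepsilon$ for all $t\in[a,b]_{\mathbb{T}}$, there exists a solution $u\in C^2_{rd}([a,b]_{\mathbb{T}})$ of $u^{\Delta\Delta}+\alpha u^{\Delta}+\beta u=0$ on $[a,b]_{\mathbb{T}}$ such that $|y(t)-u(t)|\le K\varepsilon$ for all $t\in[a,b]_{\mathbb{T}}$, for some constant $K>0$.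
   Context: A time scale $\mathbb{T}$ is a nonempty closed subset of $\mathbb{R}$; $[a,b]_{\mathbb{T}}:=[a,b]\cap\mathbb{T}$. $\sigma(t)=\inf\{s\in\mathbb{T}:s>t\}$ is the forward jump operator, $\mu(t)=\sigma(t)-t$ the graininess, and $f^{\Delta}$ denotes the delta (Hilger) derivative; $f^{\Delta\Delta}=(f^\Delta)^\Delta$. $C^2_{rd}([a,b]_{\mathbb{T}})$ denotes the functions that are twice delta differentiable on $[a,b]_{\mathbb{T}}$ with rd-continuous second delta derivative. *)

From HB Require Import structures.
From mathcomp Require Import all_boot all_order all_algebra.
From mathcomp Require Import all_classical all_reals all_analysis.
Set Implicit Arguments. Unset Strict Implicit. Unset Printing Implicit Defensive.
Import Order.TTheory GRing.Theory Num.Theory.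
Import numFieldNormedType.Exports.
Local Open Scope classical_set_scope.
Local Open Scope ring_scope.

Section TimeScales.
Variable R : realType.

Definition time_scale (T : set R) : Prop := T !=set0 /\ closed T.

Definition tsitv (T : set R) (a b : R) : set R := [set t | T t /\ a <= t <= b].

Definition fjump (X : set R) (t : R) : R :=
  if pselect (exists s, X s /\ t < s) then inf [set s | X s /\ t < s] else t.

Definition bjump (X : set R) (t : R) : R :=
  if pselect (exists s, X s /\ s < t) then sup [set s | X s /\ s < t] else t.

(* X^kappa : X with its left-scattered maximum (if any) removed *)
Definition kappa (X : set R) : set R :=
  [set t | X t /\ ~ ((forall s, X s -> s <= t) /\ bjump X t < t)].

Definition is_dderiv (X : set R) (f : R -> R) (t c : R) : Prop :=
  forall eps : R, 0 < eps -> exists delta : R, 0 < delta /\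
    forall s, X s -> `|s - t| < delta ->
      `|f (fjump X t) - f s - c * (fjump X t - s)| <= eps * `|fjump X t - s|.

(* rd-continuity on the time scale X: continuous at right-dense points,
   finite left-sided limits at left-dense points *)
Definition rd_cont (X : set R) (f : R -> R) : Prop :=
  (forall t, X t -> fjump X t = t ->
     forall eps : R, 0 < eps -> exists delta : R, 0 < delta /\
       forall s, X s -> `|s - t| < delta -> `|f s - f t| < eps) /\
  (forall t, X t -> bjump X t = t ->
     (exists s, X s /\ s < t) ->
     exists L : R, forall eps : R, 0 < eps -> exists delta : R, 0 < delta /\
       forall s, X s -> t - delta < s -> s < t -> `|f s - L| < eps).

(* y in C^2_rd(X): y1 = y^Delta on X^kappa, y2 = y^{Delta Delta} on X^{kappa^2},
   and y2 is rd-continuous on X^{kappa^2} *)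
Definition C2rd (X : set R) (y y1 y2 : R -> R) : Prop :=
  (forall t, kappa X t -> is_dderiv X y t (y1 t)) /\
  (forall t, kappa (kappa X) t -> is_dderiv (kappa X) y1 t (y2 t)) /\
  rd_cont (kappa (kappa X)) y2.

End TimeScales.

From HB Require Import structures.
From mathcomp Require Import all_boot all_order all_algebra.
From mathcomp Require Import all_classical all_reals all_analysis.
From mathcomp Require Import ring lra.
Import Order.TTheory GRing.Theory Num.Theory.
Import numFieldNormedType.Exports.
Set Implicit Arguments. Unset Strict Implicit. Unset Printing Implicit Defensive.
Local Open Scope classical_set_scope.
Local Open Scope ring_scope.

(* With l1, l2 the roots, the operator factors as (D - l1)(D - l2).  For
   w = y - u put z = w^Δ - l2 w; then |z^Δ - l1 z| <= eps.  A backward comparison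
   argument shows that a function p with |p^Δ - l p| <= eps, l > 0, vanishing at the
   right end point of a closed set satisfies |p| <= 2 eps / l.  Choosing
   u = c1 e_l1 + c2 e_l2 so that z vanishes at max [a,b]_T^κ and w at b, this
   applied first to z and then to w gives |y - u| <= 4 eps / (l1 l2). *)

Section TimeScaleCalculus.
Variable R : realType.
Implicit Types (X Y S : set R).

Lemma mem_closed_approx Y x : closed Y ->
  (forall e : R, 0 < e -> exists y, Y y /\ `|x - y| < e) -> Y x.
Proof.
move=> cY H; apply: cY => B /nbhs_ballP [e /= e0 sB].
have [y [Yy hy]] := H e e0.
by exists y; split => //; apply: sB.
Qed.

Lemma closed_sup_mem Y S : closed Y -> S `<=` Y -> S !=set0 -> has_ubound S ->
  Y (sup S).
Proof.
move=> cY SY S0 ubS; rewrite (closure_id Y).1 //.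
exact: closureS SY _ (closure_sup S0 ubS).
Qed.

Lemma fjump_id Y t : ~ (exists s, Y s /\ t < s) -> fjump Y t = t.
Proof. by move=> h; rewrite /fjump; case: pselect. Qed.

Lemma fjumpP Y t : (exists s, Y s /\ t < s) ->
  [/\ t <= fjump Y t, (forall s, Y s -> t < s -> fjump Y t <= s) &
      (forall e : R, 0 < e -> exists s, Y s /\ t < s /\ s < fjump Y t + e)].
Proof.
move=> ex; have -> : fjump Y t = inf [set s | Y s /\ t < s].
  by rewrite /fjump; case: pselect.
have ne : [set s | Y s /\ t < s] !=set0 by case: ex => s hs; exists s.
have hl : has_lbound [set s | Y s /\ t < s] by exists t => s [_ /ltW].
split.
- by apply: lb_le_inf => // s [_ /ltW].
- by move=> s Ys ts; exact: (ge_inf hl (conj Ys ts)).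
- by move=> e e0; have [s [Ys ts] hs] := inf_adherent e0 (conj ne hl); exists s.
Qed.

Lemma closed_fjump Y t : closed Y -> (exists s, Y s /\ t < s) -> Y (fjump Y t).
Proof.
move=> cY ex; have [_ fj_le fj_approx] := fjumpP ex.
apply: mem_closed_approx => // e e0.
have [s [Ys [ts se]]] := fj_approx e e0.
have := fj_le s Ys ts.
by exists s; split => //; rewrite ler0_norm; lra.
Qed.

Lemma bjump_ub Y t s : bjump Y t < t -> Y s -> s < t -> s <= bjump Y t.
Proof.
move=> bt Ys st.
have -> : bjump Y t = sup [set s | Y s /\ s < t].
  by rewrite /bjump; case: pselect => // -[]; exists s.
by apply: sup_upper_bound => //; split; [exists s | exists t => x [_ /ltW]].
Qed.

Lemma kappa_sub X : kappa X `<=` X.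
Proof. by move=> x []. Qed.

Lemma kappa_lt X x y : X x -> X y -> x < y -> kappa X x.
Proof. by move=> Xx Xy xy; split => // -[h _]; have := h y Xy; lra. Qed.

Lemma not_kappa X x : X x -> ~ kappa X x ->
  (forall s, X s -> s <= x) /\ bjump X x < x.
Proof. by move=> Xx nk; apply: contrapT => h; apply: nk. Qed.

Lemma kappa_closed X : closed X -> closed (kappa X).
Proof.
move=> cX p clp.
have Xp : X p.
  apply: cX => B nB; have [x [kx Bx]] := clp B nB.
  by exists x; split => //; case: kx.
apply: contrapT => nk; have [pmax bp] := not_kappa Xp nk.
have nB : nbhs p (ball p (p - bjump X p)).
  by apply/nbhs_ballP; exists (p - bjump X p) => //=; rewrite subr_gt0.
have [x [kx Bx]] := clp _ nB.
have xp : x < p.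
  by rewrite lt_neqAle pmax ?andbT; [apply/eqP => xp; apply: nk; rewrite -xp | case: kx].
have := bjump_ub bp (kappa_sub kx) xp.
move: Bx; rewrite /ball /= ger0_norm; [lra | by rewrite subr_ge0 ltW].
Qed.

Lemma fjump_kappa X t : (exists s, kappa X s /\ t < s) ->
  fjump (kappa X) t = fjump X t.
Proof.
move=> exK; have exX : exists s, X s /\ t < s.
  by case: exK => s [Ks ts]; exists s; split => //; apply: kappa_sub.
have [_ fK_le fK_approx] := fjumpP exK.
have [_ fX_le fX_approx] := fjumpP exX.
apply/eqP; rewrite eq_le; apply/andP; split; rewrite leNgt; apply/negP => h.
- have [s [Xs [ts hs]]] := fX_approx (fjump (kappa X) t - fjump X t)
    ltac:(by rewrite subr_gt0).
  have [Ks | nKs] := pselect (kappa X s); first by have := fK_le s Ks ts; lra.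
  case: exK => s0 [Ks0 ts0].
  have := (not_kappa Xs nKs).1 s0 (kappa_sub Ks0).
  have := fK_le s0 Ks0 ts0; lra.
- have [s [Ks [ts hs]]] := fK_approx (fjump X t - fjump (kappa X) t)
    ltac:(by rewrite subr_gt0).
  have := fX_le s (kappa_sub Ks) ts; lra.
Qed.

Lemma fjump_kappa_cases X t :
  fjump (kappa X) t = t \/ fjump (kappa X) t = fjump X t.
Proof.
have [ex|nex] := pselect (exists s, kappa X s /\ t < s).
  by right; exact: fjump_kappa.
by left; exact: fjump_id.
Qed.

End TimeScaleCalculus.

Section DeltaDerivative.
Variable R : realType.
Implicit Types (X Y : set R) (f g h p : R -> R).

Lemma norm_le_eps0 (x k : R) : 0 <= k ->
  (forall e : R, 0 < e -> `|x| <= e * k) -> x = 0.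
Proof.
move=> k0 H; apply/normr0_eq0/eqP; rewrite eq_le normr_ge0 andbT.
apply/ler_addgt0Pr => e e0; rewrite add0r.
have := H (e / (k + 1)) (divr_gt0 e0 (ltr_pwDr ltr01 k0)).
rewrite mulrAC ler_pdivlMr ?(ltr_pwDr ltr01 k0) //; nra.
Qed.

Lemma dderiv_jump Y p t c : Y t -> is_dderiv Y p t c ->
  p (fjump Y t) = p t + c * (fjump Y t - t).
Proof.
move=> Yt H.
suff : p (fjump Y t) - p t - c * (fjump Y t - t) = 0 by lra.
apply: (@norm_le_eps0 _ `|fjump Y t - t|) => // e e0.
have [d [d0 hd]] := H e e0.
by apply: hd; rewrite // subrr normr0.
Qed.

Definition cont_within Y f t := forall e : R, 0 < e -> exists d : R, 0 < d /\
  forall s, Y s -> `|s - t| < d -> `|f s - f t| < e.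

Lemma dderiv_cont Y p t c : Y t -> is_dderiv Y p t c -> cont_within Y p t.
Proof.
move=> Yt H e e0.
have jump := dderiv_jump Yt H.
move: H; rewrite /is_dderiv; move: (fjump Y t) jump => sg jump H.
have mu0 : 0 <= `|sg - t| by [].
set mu := `|sg - t| in mu0 *.
have e1 : 0 < e / (2 * (mu + 1)) by apply: divr_gt0 => //; lra.
have [d [d0 hd]] := H _ e1.
have c0 : 0 < 2 * (`|c| + 1) by have := normr_ge0 c; lra.
exists (Num.min d (Num.min 1 (e / (2 * (`|c| + 1))))).
split; first by rewrite !lt_min d0 ltr01 /= divr_gt0.
move=> s Ys; rewrite !lt_min => /and3P [sd s1 sc].
have {}hd := hd s Ys sd.
have -> : p s - p t = c * (s - t) - (p sg - p s - c * (sg - s)) by rewrite jump; ring.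
have sg_s : `|sg - s| <= mu + 1.
  have -> : sg - s = (sg - t) + (t - s) by ring.
  by apply: le_trans (ler_normD _ _) _; rewrite (distrC t s) /mu; lra.
have hB : `|p sg - p s - c * (sg - s)| <= e / 2.
  apply: le_trans hd _; apply: le_trans (ler_wpM2l (ltW e1) sg_s) _.
  by rewrite mulrAC ler_pdivrMr; nra.
have hc : `|c * (s - t)| < e / 2.
  rewrite normrM; apply: le_lt_trans (ler_wpM2l (normr_ge0 c) (ltW sc)) _.
  rewrite mulrA ltr_pdivrMr //; have := normr_ge0 c; nra.
by apply: le_lt_trans (ler_normB _ _) _; lra.
Qed.

Lemma dderiv_comb Y f g h t c d c' (k1 k2 k3 : R) :
  is_dderiv Y f t c -> is_dderiv Y g t d ->
  (forall x, h x = k1 * f x + k2 * g x + k3) -> c' = k1 * c + k2 * d ->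
  is_dderiv Y h t c'.
Proof.
move=> Hf Hg Eh -> e e0.
have K0 : 0 < `|k1| + `|k2| + 1 by have := normr_ge0 k1; have := normr_ge0 k2; lra.
have e1 : 0 < e / (`|k1| + `|k2| + 1) by apply: divr_gt0.
have [d1 [d10 h1]] := Hf _ e1.
have [d2 [d20 h2]] := Hg _ e1.
exists (Num.min d1 d2); split; first by rewrite lt_min d10.
move=> s Ys; rewrite lt_min => /andP [s1 s2].
have {}h1 := h1 s Ys s1; have {}h2 := h2 s Ys s2.
move: (fjump Y t) h1 h2 => sg h1 h2.
rewrite !Eh.
have -> : k1 * f sg + k2 * g sg + k3 - (k1 * f s + k2 * g s + k3) -
    (k1 * c + k2 * d) * (sg - s) =
    k1 * (f sg - f s - c * (sg - s)) + k2 * (g sg - g s - d * (sg - s)) by ring.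
have Ee : e / (`|k1| + `|k2| + 1) * (`|k1| + `|k2| + 1) = e by rewrite mulfVK //; lra.
move: (e / _) e1 h1 h2 Ee => e' e1 h1 h2 Ee.
apply: (le_trans (ler_normD _ _)); rewrite !normrM.
have := ler_wpM2l (normr_ge0 k1) h1; have := ler_wpM2l (normr_ge0 k2) h2.
have := normr_ge0 (sg - s); have := normr_ge0 k1; have := normr_ge0 k2.
nra.
Qed.

Lemma cont_within_comb Y f g h t (k1 k2 k3 : R) :
  cont_within Y f t -> cont_within Y g t ->
  (forall x, h x = k1 * f x + k2 * g x + k3) -> cont_within Y h t.
Proof.
move=> Hf Hg Eh e e0.
have K0 : 0 < `|k1| + `|k2| + 1 by have := normr_ge0 k1; have := normr_ge0 k2; lra.
have e1 : 0 < e / (`|k1| + `|k2| + 1) by apply: divr_gt0.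
have [d1 [d10 h1]] := Hf _ e1.
have [d2 [d20 h2]] := Hg _ e1.
exists (Num.min d1 d2); split; first by rewrite lt_min d10.
move=> s Ys; rewrite lt_min => /andP [s1 s2].
have {}h1 := h1 s Ys s1; have {}h2 := h2 s Ys s2.
rewrite !Eh.
have -> : k1 * f s + k2 * g s + k3 - (k1 * f t + k2 * g t + k3) =
    k1 * (f s - f t) + k2 * (g s - g t) by ring.
have Ee : e / (`|k1| + `|k2| + 1) * (`|k1| + `|k2| + 1) = e by rewrite mulfVK //; lra.
move: (e / _) e1 h1 h2 Ee => e' e1 h1 h2 Ee.
apply: (le_lt_trans (ler_normD _ _)); rewrite !normrM.
have := ler_wpM2l (normr_ge0 k1) (ltW h1); have := ler_wpM2l (normr_ge0 k2) (ltW h2).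
have := normr_ge0 k1; have := normr_ge0 k2.
nra.
Qed.

Lemma dderiv_sub Y X f t c : Y `<=` X -> fjump Y t = fjump X t ->
  is_dderiv X f t c -> is_dderiv Y f t c.
Proof.
move=> sYX E H e e0; have [d [d0 hd]] := H e e0.
by exists d; split => // s Ys; rewrite E; apply: hd; apply: sYX.
Qed.

Lemma cont_within_sub Y X f t : Y `<=` X -> cont_within X f t -> cont_within Y f t.
Proof.
move=> sYX H e e0; have [d [d0 hd]] := H e e0.
by exists d; split => // s Ys; apply: hd; apply: sYX.
Qed.

Lemma rd_cont_of_cont Y X f : Y `<=` X -> (forall t, X t -> cont_within X f t) ->
  rd_cont Y f.
Proof.
move=> sYX H; split.
- move=> t Yt _ e e0; have [d [d0 hd]] := H t (sYX _ Yt) e e0.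
  by exists d; split => // s Ys; apply: hd; apply: sYX.
- move=> t Yt _ _; exists (f t) => e e0.
  have [d [d0 hd]] := H t (sYX _ Yt) e e0.
  exists d; split => // s Ys h1 h2; apply: hd; first exact: sYX.
  by rewrite ltr0_norm; lra.
Qed.

End DeltaDerivative.

Section BackwardComparison.
Variable R : realType.
Implicit Types (Y S : set R) (p : R -> R).

Lemma cont_within_sup_le0 Y S p : S `<=` Y -> (forall x, S x -> p x <= 0) ->
  S !=set0 -> has_ubound S -> Y (sup S) -> cont_within Y p (sup S) ->
  p (sup S) <= 0.
Proof.
move=> SY Sp S0 ubS Ys cs; rewrite leNgt; apply/negP => ps.
have [d [d0 hd]] := cs _ ps.
have [x Sx hx] := sup_adherent d0 (conj S0 ubS).
have xs : x <= sup S by exact: sup_upper_bound.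
have := hd x (SY _ Sx); rewrite ler0_norm ?subr_le0 // => /(_ ltac:(lra)).
by have := Sp x Sx; rewrite ltr_norml; lra.
Qed.

Lemma dderiv_nonpos_right Y p t m c (l d : R) : closed Y -> Y t -> Y m -> t < m ->
  0 <= l -> 0 < d -> is_dderiv Y p t c -> c <= l * p t - d -> p t <= 0 ->
  exists s, [/\ Y s, t < s & p s <= 0].
Proof.
move=> cY Yt Ym tm l0 d0 dp hc pt.
have ex : exists s, Y s /\ t < s by exists m.
have [t_le_sg _ sg_approx] := fjumpP ex.
have [t_sg | sg_t] := ltP t (fjump Y t).
  exists (fjump Y t); split => //; first exact: closed_fjump.
  rewrite (dderiv_jump Yt dp).
  have : c * (fjump Y t - t) <= (l * p t - d) * (fjump Y t - t).
    by apply: ler_wpM2r => //; rewrite subr_ge0 ltW.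
  have : (l * p t - d) * (fjump Y t - t) <= 0.
    by apply: mulr_le0_ge0; [nra | rewrite subr_ge0 ltW].
  lra.
have sgE : fjump Y t = t by apply/eqP; rewrite eq_le sg_t t_le_sg.
have [e [e0 he]] := dp _ (ltac:(lra) : 0 < d / 2).
have [s [Ys [ts se]]] := sg_approx e e0.
rewrite sgE in se; exists s; split => //; rewrite leNgt; apply/negP => ps.
have st0 : 0 < s - t by rewrite subr_gt0.
have st_e : `|s - t| < e by rewrite (gtr0_norm st0); lra.
have := he s Ys st_e.
rewrite sgE (distrC t s) (gtr0_norm st0) ler_norml => /andP [h _].
have : c * (s - t) <= (l * p t - d) * (s - t) by apply: ler_wpM2r => //; exact: ltW.
have : l * p t * (s - t) <= 0 by apply: mulr_le0_ge0; [nra | exact: ltW].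
nra.
Qed.

Lemma pos_of_dderiv_le Y (m l d : R) p : closed Y -> Y m ->
  (forall s, Y s -> s <= m) -> 0 <= l -> 0 < d ->
  (forall t, Y t -> t < m -> exists c, is_dderiv Y p t c /\ c <= l * p t - d) ->
  (kappa Y m -> cont_within Y p m) -> 0 < p m -> forall t, Y t -> 0 < p t.
Proof.
(* sup {p <= 0} lies below m and has p <= 0, but then [dderiv_nonpos_right]
   finds such a point further right. *)
move=> cY Ym mmax l0 d0 Hd Hc pm t0 Yt0; rewrite ltNge; apply/negP => pt0.
pose S := [set t | Y t /\ p t <= 0].
have S0 : S !=set0 by exists t0.
have ubS : has_ubound S by exists m => x [Yx _]; exact: mmax.
have SY : S `<=` Y by move=> x [].
have Ys := closed_sup_mem cY SY S0 ubS.
have s_le_m : sup S <= m by exact: mmax.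
have cont_s : cont_within Y p (sup S).
  have [sm | ms] := ltP (sup S) m.
    by have [c [dp _]] := Hd _ Ys sm; exact: dderiv_cont dp.
  have -> : sup S = m by apply/eqP; rewrite eq_le s_le_m.
  apply: Hc; apply: contrapT => nk; have [_ bm] := not_kappa Ym nk.
  suff : sup S <= bjump Y m by lra.
  apply: ge_sup => // x [Yx px]; apply: bjump_ub => //.
  by rewrite lt_neqAle mmax // andbT; apply/eqP => xm; move: px; rewrite xm; lra.
have ps : p (sup S) <= 0.
  by apply: (cont_within_sup_le0 SY) => // x [].
have sm : sup S < m.
  by rewrite lt_neqAle s_le_m andbT; apply/eqP => sm; move: ps; rewrite sm; lra.
have [c [dp hc]] := Hd _ Ys sm.
have [x [Yx sx px]] := dderiv_nonpos_right cY Ys Ym sm l0 d0 dp hc ps.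
by have := sup_upper_bound (conj S0 ubS) (conj Yx px); lra.
Qed.

Lemma dderiv_backward_bound Y (m l eps : R) p p1 : closed Y -> Y m ->
  (forall s, Y s -> s <= m) -> 0 < l -> 0 < eps ->
  (forall t, Y t -> t < m -> is_dderiv Y p t (p1 t) /\ `|p1 t - l * p t| <= eps) ->
  (kappa Y m -> cont_within Y p m) -> p m = 0 ->
  forall t, Y t -> `|p t| <= 2 * eps / l.
Proof.
move=> cY Ym mmax l0 eps0 Hd Hc pm.
have N0 : 0 < 2 * eps / l by apply: divr_gt0 => //; lra.
have lN : l * (2 * eps / l) = 2 * eps by rewrite mulrC mulfVK ?lt0r_neq0.
(* q := sg p + 2 eps / l satisfies q^Δ <= l q - eps and q m > 0. *)
have shifted_pos (sg : R) : `|sg| = 1 ->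
    forall t, Y t -> 0 < sg * p t + 2 * eps / l.
  move=> sg1; apply: (pos_of_dderiv_le cY Ym mmax (ltW l0) eps0).
  - move=> t Yt tm; have [dp hp] := Hd t Yt tm.
    exists (sg * p1 t); split.
      by apply: (dderiv_comb (k1 := sg) (k2 := 0) (k3 := 2 * eps / l) dp dp) => *; ring.
    have : `|sg * (p1 t - l * p t)| <= eps by rewrite normrM sg1 mul1r.
    rewrite ler_norml mulrBr => /andP [_ h].
    have -> : l * (sg * p t + 2 * eps / l) - eps = sg * (l * p t) + eps.
      by rewrite mulrDr lN; ring.
    lra.
  - move=> /Hc cp.
    by apply: (cont_within_comb (k1 := sg) (k2 := 0) (k3 := 2 * eps / l) cp cp) => *; ring.
  - by rewrite pm mulr0 add0r.
move=> t Yt; have := shifted_pos 1 (normr1 _) t Yt.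
have := shifted_pos (-1) (normrN1 _) t Yt.
by rewrite ler_norml; lra.
Qed.

End BackwardComparison.

Section TimeScaleExponential.
Variables (R : realType) (X : set R) (a lam : R).
Hypotheses (Xa : X a) (Xge : forall x, X x -> a <= x) (lam0 : 0 < lam).

Definition exp_super (g : R -> R) := 1 <= g a /\
  forall y x, X y -> X x -> y <= x -> g y * (1 + lam * (x - y)) <= g x.

(* e_lam(., a), built as the least supersolution of x^Δ = lam x, x(a) = 1,
   rather than via the cylinder transformation. *)
Definition tsexp x := inf [set g x | g in exp_super].

Let lamD y x : y <= x -> 0 <= lam * (x - y).
Proof. by move=> yx; apply: mulr_ge0; [exact: ltW | rewrite subr_ge0]. Qed.

Lemma exp_super_expR : exp_super (fun x => expR (lam * (x - a))).
Proof.
split; first by rewrite subrr mulr0 expR0.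
move=> y x Xy Xx yx.
have -> : lam * (x - a) = lam * (y - a) + lam * (x - y) by ring.
by rewrite expRD; apply: ler_wpM2l; [exact: expR_ge0 | exact: expR_ge1Dx].
Qed.

Lemma exp_super_ge1 g x : exp_super g -> X x -> 1 <= g x.
Proof.
move=> [g1 gs] Xx; have := gs a x Xa Xx (Xge Xx); have := lamD (Xge Xx).
nra.
Qed.

Let tsexp_has_inf x : X x -> has_inf [set g x | g in exp_super].
Proof.
move=> Xx; split; first by exists (expR (lam * (x - a))), (fun x => expR (lam * (x - a)));
  [exact: exp_super_expR|].
by exists 1 => _ [g sg <-]; exact: exp_super_ge1.
Qed.

Lemma tsexp_le g x : X x -> exp_super g -> tsexp x <= g x.
Proof. by move=> Xx sg; apply: (ge_inf (tsexp_has_inf Xx).2); exists g. Qed.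

Lemma tsexp_ge1 x : X x -> 1 <= tsexp x.
Proof.
move=> Xx; apply: lb_le_inf; first exact: (tsexp_has_inf Xx).1.
by move=> _ [g sg <-]; exact: exp_super_ge1.
Qed.

Lemma exp_super_tsexp : exp_super tsexp.
Proof.
split; first exact: tsexp_ge1.
move=> y x Xy Xx yx; apply: lb_le_inf; first exact: (tsexp_has_inf Xx).1.
move=> _ [g sg <-]; have := tsexp_le Xy sg; have := sg.2 y x Xy Xx yx.
have := lamD yx; nra.
Qed.

(* Minimality: cutting [tsexp] down to [phi] on [(y, z]] keeps it a supersolution. *)
Lemma tsexp_le_cut y z (phi : R -> R) : X y ->
  (forall y' x, X y' -> X x -> y' <= y -> y < x <= z ->
     tsexp y' * (1 + lam * (x - y')) <= phi x) ->
  (forall y' x, X y' -> X x -> y < y' -> y' <= x <= z ->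
     phi y' * (1 + lam * (x - y')) <= phi x) ->
  forall x, X x -> y < x <= z -> tsexp x <= phi x.
Proof.
move=> Xy hA hB.
pose cut x := y < x <= z.
pose g x := if cut x then Num.min (tsexp x) (phi x) else tsexp x.
have g_le x : g x <= tsexp x by rewrite /g; case: ifP; rewrite ?ge_min ?lexx.
have super_g : exp_super g.
  split; first by rewrite /g /cut ltNge (Xge Xy) /=; exact: tsexp_ge1.
  move=> y' x Xy' Xx yx; have k0 := lamD yx.
  have to_tsexp : g y' * (1 + lam * (x - y')) <= tsexp x.
    apply: le_trans (exp_super_tsexp.2 y' x Xy' Xx yx).
    by apply: ler_wpM2r (g_le y'); lra.
  rewrite {2}/g; case: ifP => cx //; rewrite le_min to_tsexp /=.
  move: cx; rewrite /cut => /andP [yx' xz].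
  rewrite /g /cut; have [yy' | y'y] := ltP y y' => /=; last by apply: hA => //; rewrite yx'.
  rewrite (le_trans yx xz) /=; apply: le_trans (hB y' x Xy' Xx yy' _); last by rewrite yx.
  by apply: ler_wpM2r; [lra | rewrite ge_min lexx orbT].
move=> x Xx cx; apply: le_trans (tsexp_le Xx super_g) _.
by rewrite /g -/(cut x) /cut cx ge_min lexx orbT.
Qed.

Lemma tsexp_sandwich y x : X y -> X x -> y < x -> lam * (x - y) < 1 ->
  tsexp y * (1 + lam * (x - y)) <= tsexp x /\
  tsexp x * (1 - lam * (x - y)) <= tsexp y.
Proof.
move=> Xy Xx yx hl; split; first exact: exp_super_tsexp.2 _ _ Xy Xx (ltW yx).
have den z : z <= x -> 0 < 1 - lam * (z - y).
  by move=> zx; have := ler_wpM2l (ltW lam0) (lerB zx (lexx y)); lra.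
rewrite -ler_pdivlMr ?den //.
apply: (tsexp_le_cut (y := y) (z := x)
  (phi := fun z => tsexp y / (1 - lam * (z - y)))) => //; last by rewrite yx lexx.
- move=> y' x' Xy' Xx' y'y /andP [yx' x'x].
  have k : (1 + lam * (x' - y')) * (1 - lam * (x' - y)) <= 1 + lam * (y - y').
    have := lamD y'y; have := lamD (ltW yx').
    have -> : lam * (x' - y') = lam * (x' - y) + lam * (y - y') by ring.
    nra.
  rewrite ler_pdivlMr ?den // -mulrA.
  apply: le_trans (exp_super_tsexp.2 y' y Xy' Xy y'y).
  by apply: ler_wpM2l => //; have := tsexp_ge1 Xy'; lra.
- move=> y' x' Xy' Xx' yy' /andP [y'x' x'x].
  have k : (1 + lam * (x' - y')) * (1 - lam * (x' - y)) <= 1 - lam * (y' - y).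
    have := lamD (ltW yy'); have := lamD y'x'.
    have -> : lam * (x' - y') = lam * (x' - y) - lam * (y' - y) by ring.
    nra.
  have Dy' := den y' (le_trans y'x' x'x).
  rewrite ler_pdivlMr ?den // -mulrA.
  apply: le_trans (ler_wpM2l _ k) _.
    by apply: divr_ge0; [have := tsexp_ge1 Xy; lra | exact: ltW].
  by rewrite mulfVK // lt0r_neq0.
Qed.

Lemma tsexp_jump t : X t -> X (fjump X t) -> t < fjump X t ->
  (forall x, X x -> t < x -> fjump X t <= x) ->
  tsexp (fjump X t) = tsexp t * (1 + lam * (fjump X t - t)).
Proof.
move: (fjump X t) => sg Xt Xsg tsg sg_min.
apply/eqP; rewrite eq_le (exp_super_tsexp.2 t sg Xt Xsg (ltW tsg)) andbT.
apply: (tsexp_le_cut (y := t) (z := sg)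
  (phi := fun z => tsexp t * (1 + lam * (z - t)))) => //; last by rewrite tsg lexx.
- move=> y' x Xy' Xx y't /andP [tx xsg].
  have -> : x = sg by apply/eqP; rewrite eq_le xsg sg_min.
  have k : 1 + lam * (sg - y') <= (1 + lam * (t - y')) * (1 + lam * (sg - t)).
    have := lamD y't; have := lamD (ltW tsg).
    have -> : lam * (sg - y') = lam * (t - y') + lam * (sg - t) by ring.
    nra.
  apply: le_trans (ler_wpM2l _ k) _; first by have := tsexp_ge1 Xy'; lra.
  rewrite mulrA; apply: ler_wpM2r; first by have := lamD (ltW tsg); lra.
  exact: exp_super_tsexp.2.
- move=> y' x Xy' Xx ty' /andP [y'x xsg].
  have -> : y' = sg by apply/eqP; rewrite eq_le (le_trans y'x xsg) sg_min.
  have -> : x = sg by apply/eqP; rewrite eq_le xsg sg_min // (lt_le_trans ty').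
  by rewrite subrr mulr0 addr0 mulr1.
Qed.

Lemma tsexp_increment t e : X t -> 0 < e -> exists d, 0 < d /\
  forall s, X s -> `|s - t| < d ->
    `|tsexp t - tsexp s - lam * tsexp t * (t - s)| <= e * `|t - s|.
Proof.
move=> Xt e0; have Et1 := tsexp_ge1 Xt.
have K0 : 0 < 2 * tsexp t * lam ^+ 2 by apply: mulr_gt0; [lra | exact: exprn_gt0].
exists (Num.min (1 / (2 * lam)) (e / (2 * tsexp t * lam ^+ 2))); split.
  by rewrite lt_min; apply/andP; split; apply: divr_gt0 => //; rewrite mulr_gt0.
move=> s Xs; rewrite lt_min => /andP [h1 h2].
have hl : lam * `|s - t| < 1 / 2 by move: h1; rewrite ltr_pdivlMr ?mulr_gt0 //; lra.
have hK : 2 * tsexp t * lam ^+ 2 * `|s - t| <= e.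
  by move: h2; rewrite ltr_pdivlMr // => h; lra.
have Es1 := tsexp_ge1 Xs.
rewrite (distrC t s).
have [st | ts | ->] := ltgtP s t; last by rewrite !subrr !(mulr0, subr0, normr0).
- rewrite ltr0_norm ?subr_lt0 // in hl hK *.
  have [up lo] := tsexp_sandwich Xs Xt st ltac:(lra).
  have := lamD (ltW st) => ?; rewrite ler_norml; apply/andP; split; nra.
- rewrite gtr0_norm ?subr_gt0 // in hl hK *.
  have [up lo] := tsexp_sandwich Xt Xs ts ltac:(lra).
  have := lamD (ltW ts) => ?; rewrite ler_norml; apply/andP; split; nra.
Qed.

Lemma tsexp_dderiv Y t : closed X -> Y `<=` X -> Y t ->
  fjump Y t = t \/ fjump Y t = fjump X t -> is_dderiv Y tsexp t (lam * tsexp t).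
Proof.
move=> cX sYX Yt hj e e0; have Xt := sYX _ Yt.
have [d [d0 hd]] := tsexp_increment Xt e0.
have [Yfix | Ymove] := pselect (fjump Y t = t).
  by exists d; split => // s Ys hs; rewrite Yfix; exact: hd (sYX _ Ys) hs.
have hYX : fjump Y t = fjump X t by case: hj.
have exY : exists s, Y s /\ t < s by apply: contrapT => /fjump_id.
have exX : exists s, X s /\ t < s by case: exY => s [Ys ts]; exists s; split; [exact: sYX|].
have [fY1 fY2 _] := fjumpP exY.
have [_ fX2 _] := fjumpP exX.
have tsg : t < fjump X t by rewrite -hYX lt_neqAle fY1 andbT eq_sym; apply/eqP.
have Ej := tsexp_jump Xt (closed_fjump cX exX) tsg fX2.
exists (Num.min d (fjump X t - t)); split; first by rewrite lt_min d0 subr_gt0 tsg.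
move=> s Ys; rewrite lt_min => /andP [h1 h2].
have st : s <= t.
  rewrite leNgt; apply/negP => ts; have := fY2 s Ys ts; rewrite hYX.
  by move: h2; rewrite gtr0_norm ?subr_gt0 //; lra.
have := hd s (sYX _ Ys) h1; rewrite hYX Ej.
have -> : tsexp t * (1 + lam * (fjump X t - t)) - tsexp s -
    lam * tsexp t * (fjump X t - s) = tsexp t - tsexp s - lam * tsexp t * (t - s) by ring.
move=> h; apply: (le_trans h); apply: ler_wpM2l; first exact: ltW.
by rewrite !ger0_norm ?subr_ge0 //; [lra | exact: le_trans st (ltW tsg)].
Qed.

End TimeScaleExponential.

Lemma distinct_roots_vieta (F : idomainType) (alpha beta l1 l2 : F) : l1 != l2 ->
  l1 ^+ 2 + alpha * l1 + beta = 0 -> l2 ^+ 2 + alpha * l2 + beta = 0 ->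
  alpha = - (l1 + l2) /\ beta = l1 * l2.
Proof.
move=> l12 e1 e2.
have : (l1 - l2) * (l1 + l2 + alpha) = 0.
  by rewrite -[RHS](subrr 0) -{1}e1 -e2; ring.
move/eqP; rewrite mulf_eq0 subr_eq0 (negbTE l12) /= => /eqP h.
have ea : alpha = - (l1 + l2) by apply: (addIr (l1 + l2)); rewrite addNr addrC.
by split; last by rewrite -[beta]subr0 -e1 ea; ring.
Qed.

Section HyersUlam.
Variable R : realType.
Implicit Types (T X Y : set R) (w : R -> R).

Lemma tsitv_closed T (a b : R) : closed T -> closed (tsitv T a b).
Proof.
move=> cT; have -> : tsitv T a b = T `&` ([set x | a <= x] `&` [set x | x <= b]).
  by apply/seteqP; split => x /=; [case=> Tx /andP [] | case=> Tx [h1 h2]; split => //; apply/andP].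
by apply: closedI => //; apply: closedI; [exact: closed_ge | exact: closed_le].
Qed.

Lemma closed_max Y (x b : R) : closed Y -> Y x -> (forall s, Y s -> s <= b) ->
  exists m, Y m /\ forall s, Y s -> s <= m.
Proof.
move=> cY Yx Yb; have hs : has_sup Y by split; [exists x | exists b].
by exists (sup Y); split; [exact: closed_sup_mem hs.1 hs.2 | exact: sup_upper_bound].
Qed.

Definition dderiv2 X w w1 w2 :=
  (forall t, kappa X t -> is_dderiv X w t (w1 t)) /\
  (forall t, kappa (kappa X) t -> is_dderiv (kappa X) w1 t (w2 t)).

Lemma dderiv2_sub X y y1 y2 u u1 u2 : dderiv2 X y y1 y2 -> dderiv2 X u u1 u2 ->
  dderiv2 X (y \- u) (y1 \- u1) (y2 \- u2).
Proof.
move=> [Dy Dy1] [Du Du1]; split=> t Kt.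
  by apply: (dderiv_comb (k1 := 1) (k2 := -1) (k3 := 0) (Dy t Kt) (Du t Kt)) => * /=; ring.
by apply: (dderiv_comb (k1 := 1) (k2 := -1) (k3 := 0) (Dy1 t Kt) (Du1 t Kt)) => * /=; ring.
Qed.

Lemma second_order_backward_bound X (b m l1 l2 eps : R) w w1 w2 :
  closed X -> X b -> (forall s, X s -> s <= b) ->
  kappa X m -> (forall s, kappa X s -> s <= m) ->
  0 < l1 -> 0 < l2 -> 0 < eps -> dderiv2 X w w1 w2 ->
  (forall t, kappa (kappa X) t ->
     `|w2 t - (l1 + l2) * w1 t + l1 * l2 * w t| <= eps) ->
  w1 m = l2 * w m -> w b = 0 ->
  forall t, X t -> `|w t| <= 4 / (l1 * l2) * eps.
Proof.
move=> cX Xb bmax Km mmax l10 l20 eps0 [Dw Dw1] Lw wm wb.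
have dw_kappa t : kappa X t -> t < m -> is_dderiv (kappa X) w t (w1 t).
  move=> Kt tm; apply: dderiv_sub (kappa_sub (X := X)) _ (Dw t Kt).
  by apply: fjump_kappa; exists m.
have z_bound : forall t, kappa X t -> `|w1 t - l2 * w t| <= 2 * eps / l1.
  apply: (dderiv_backward_bound (p1 := fun t => w2 t - l2 * w1 t)
    (kappa_closed cX) Km mmax l10 eps0); last by rewrite wm subrr.
  - move=> t Kt tm; have KKt := kappa_lt Kt Km tm; split.
      by apply: (dderiv_comb (k1 := 1) (k2 := - l2) (k3 := 0) (Dw1 t KKt) (dw_kappa t Kt tm))
        => *; ring.
    by have := Lw t KKt; congr (`|_| <= _); ring.
  - move=> KKm; apply: (cont_within_comb (k1 := 1) (k2 := - l2) (k3 := 0)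
      (dderiv_cont Km (Dw1 m KKm))
      (cont_within_sub (kappa_sub (X := X)) (dderiv_cont (kappa_sub Km) (Dw m Km))))
      => *; ring.
have N0 : 0 < 2 * eps / l1 by rewrite divr_gt0 ?mulr_gt0.
move=> t Xt; have -> : 4 / (l1 * l2) * eps = 2 * (2 * eps / l1) / l2.
  by field; rewrite !lt0r_neq0.
apply: (dderiv_backward_bound (p1 := w1) cX Xb bmax l20 N0) => //.
  move=> s Xs sb; have Ks := kappa_lt Xs Xb sb; split; first exact: Dw.
  by rewrite distrC -normrN opprB; exact: z_bound.
by move=> Kb; exact: dderiv_cont Xb (Dw b Kb).
Qed.

Definition expcomb X (a l1 l2 c1 c2 : R) (k : nat) x :=
  c1 * l1 ^+ k * tsexp X a l1 x + c2 * l2 ^+ k * tsexp X a l2 x.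

Section ExpCombination.
Variables (X : set R) (a l1 l2 : R).
Hypotheses (cX : closed X) (Xa : X a) (Xge : forall x, X x -> a <= x).
Hypotheses (l10 : 0 < l1) (l20 : 0 < l2).

Lemma expcomb_dderiv Y c1 c2 k t : Y `<=` X -> Y t ->
  fjump Y t = t \/ fjump Y t = fjump X t ->
  is_dderiv Y (expcomb X a l1 l2 c1 c2 k) t (expcomb X a l1 l2 c1 c2 k.+1 t).
Proof.
move=> sYX Yt hj.
apply: (dderiv_comb (k1 := c1 * l1 ^+ k) (k2 := c2 * l2 ^+ k) (k3 := 0)
  (tsexp_dderiv Xa Xge l10 cX sYX Yt hj) (tsexp_dderiv Xa Xge l20 cX sYX Yt hj)).
  by move=> x; rewrite /expcomb addr0.
by rewrite /expcomb !exprS; ring.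
Qed.

Lemma expcomb_C2rd c1 c2 :
  C2rd X (expcomb X a l1 l2 c1 c2 0) (expcomb X a l1 l2 c1 c2 1)
    (expcomb X a l1 l2 c1 c2 2).
Proof.
have Dexp k t : X t -> is_dderiv X (expcomb X a l1 l2 c1 c2 k) t
    (expcomb X a l1 l2 c1 c2 k.+1 t).
  by move=> Xt; apply: expcomb_dderiv => //; right.
split; first by move=> t /kappa_sub /Dexp.
split; first by move=> t [Kt _]; apply: expcomb_dderiv (fjump_kappa_cases X t) => //;
  exact: kappa_sub.
apply: (rd_cont_of_cont (X := X)); first by move=> t /kappa_sub /kappa_sub.
by move=> t Xt; exact: dderiv_cont Xt (Dexp 2%N t Xt).
Qed.

Lemma expcomb_match (m b A B : R) : X m -> X b -> l1 != l2 ->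
  exists c1 c2, expcomb X a l1 l2 c1 c2 1 m - l2 * expcomb X a l1 l2 c1 c2 0 m = A /\
    expcomb X a l1 l2 c1 c2 0 b = B.
Proof.
move=> Xm Xb l12.
have E1m : tsexp X a l1 m != 0.
  by rewrite lt0r_neq0 // (lt_le_trans ltr01 (tsexp_ge1 Xa Xge l10 Xm)).
have E2b : tsexp X a l2 b != 0.
  by rewrite lt0r_neq0 // (lt_le_trans ltr01 (tsexp_ge1 Xa Xge l20 Xb)).
have l12' : l1 - l2 != 0 by rewrite subr_eq0.
pose c1 := A / ((l1 - l2) * tsexp X a l1 m).
exists c1, ((B - c1 * tsexp X a l1 b) / tsexp X a l2 b); rewrite /expcomb; split.
  by rewrite /c1; field; rewrite ?E1m ?l12' ?E2b.
by field.
Qed.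

End ExpCombination.
End HyersUlam.

Theorem mainTheorem1 (R : realType) (T : set R) (a b alpha beta : R) :
  time_scale T -> T a -> T b -> a < b ->
  (exists l1 l2 : R, 0 < l1 /\ 0 < l2 /\ l1 != l2 /\
     l1 ^+ 2 + alpha * l1 + beta = 0 /\ l2 ^+ 2 + alpha * l2 + beta = 0) ->
  exists K : R, 0 < K /\
    forall eps : R, 0 < eps ->
    forall y y1 y2 : R -> R,
      C2rd (tsitv T a b) y y1 y2 ->
      (forall t, kappa (kappa (tsitv T a b)) t ->
         `|y2 t + alpha * y1 t + beta * y t| <= eps) ->
      exists u u1 u2 : R -> R,
        C2rd (tsitv T a b) u u1 u2 /\
        (forall t, kappa (kappa (tsitv T a b)) t ->
           u2 t + alpha * u1 t + beta * u t = 0) /\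
        (forall t, tsitv T a b t -> `|y t - u t| <= K * eps).
Proof.
move=> [_ cT] Ta Tb ab [l1 [l2 [l10 [l20 [l12 [e1 e2]]]]]].
have [-> ->] := distinct_roots_vieta l12 e1 e2.
exists (4 / (l1 * l2)); split; first by rewrite divr_gt0 ?mulr_gt0.
move=> eps eps0 y y1 y2 [Dy [Dy1 _]] Ly.
set X := tsitv T a b.
have cX : closed X := tsitv_closed cT.
have Xa : X a by split; rewrite // lexx ltW.
have Xb : X b by split; rewrite // lexx ltW.
have Xge x : X x -> a <= x by case=> _ /andP [].
have Xle x : X x -> x <= b by case=> _ /andP [].
have [m [Km mmax]] := closed_max (kappa_closed cX) (kappa_lt Xa Xb ab)
  (fun s Ks => Xle s (kappa_sub Ks)).
have [c1 [c2 [um ub]]] := expcomb_match Xa Xge l10 l20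
  (y1 m - l2 * y m) (y b) (kappa_sub Km) Xb l12.
pose u := expcomb X a l1 l2 c1 c2.
have [Du [Du1 _]] := expcomb_C2rd cX Xa Xge l10 l20 c1 c2.
exists (u 0%N), (u 1%N), (u 2%N); split; first exact: expcomb_C2rd.
split; first by move=> t _; rewrite /u /expcomb; ring.
apply: (second_order_backward_bound cX Xb Xle Km mmax l10 l20 eps0
  (dderiv2_sub (conj Dy Dy1) (conj Du Du1))).
- by move=> s KKs; have := Ly s KKs; congr (`|_| <= _); rewrite /u /expcomb /=; ring.
- by rewrite /u /= mulrBr; lra.
- by rewrite /= -ub subrr.
Qed.
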